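(* Let $g\colon(0,1)\to\mathbb{R}$ be a continuous, strictly increasing function such that $g(1-a)=-g(a)$ for all $a\in(0,1)$ and $\lim_{a\to0^+}g(a)=-\infty$, and let $J(a,b)=g^{-1}\bigl(g(a)-g(b)\bigr)$ for $(a,b)\in S=(0,1)\times(0,1)$. If $g$ is continuously differentiable on $(0,1)$ with $g'$ never equal to $0$, then $J$ is differentiable on $S$. Conversely, if $J$ is differentiable on $S$, then $g$ is differentiable on $(0,1)$ and $g'$ is never $0$. *)

From Stdlib Require Import Reals ClassicalEpsilon.
From Coquelicot Require Import Coquelicot.
Open Scope R_scope.

Definition ginv (g : R -> R) (y : R) : R :=
  epsilon (inhabits 0) (fun a => 0 < a < 1 /\ g a = y).

Definition Jfun (g : R -> R) (a b : R) : R := ginv g (g a - g b).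

Definition J_differentiable_on_S (g : R -> R) : Prop :=
  forall a b : R, 0 < a < 1 -> 0 < b < 1 ->
    ex_filterdiff (fun p : R * R => Jfun g (fst p) (snd p)) (locally (a, b)).

(* Forward: [Jfun g] is [ginv g] composed with [(a, b) |-> g a - g b], and [ginv g] is
   differentiable at every [y] because [g'] does not vanish at [ginv g y].

   Backward: from [g x = g (Jfun g x a) + g a] and [Jfun g a a = 1/2], the chain rule gives
   [g' a = d1J(a,a) * g'(1/2)], and [d1J(b,b) > 0] because [x |-> Jfun g (Jfun g x b) (1 - b)] is
   the identity.  It remains to show that [G t / t] has a positive limit as [t -> 0+], where
   [G t = g (1/2 + t)] (oddness of [G] handles [t < 0]).  The quotients
   [Q b h = (Jfun g (b + h) b - 1/2) / h] tend to [d1J(b,b) > 0] as [h -> 0+], so by Baire's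
   theorem there is an interval [[p, q]] on which [Q] stays in [[mu, mu * exp (3 th)]] for all
   small [h].  Every increment [g (x + h) - g x] equals [G t] with [t = h * Q x h], so a Dini-type
   argument on [[p, q]] traps [G t / t], for small [t], between [s / nu] and [s / mu], where [s]
   is the slope of [g] over [[p, q]].  Letting [th -> 0] makes [G t / t] a Cauchy family. *)

From Stdlib Require Import Reals Lra Lia ZArith Ranalysis5 ClassicalEpsilon Classical.
From Stdlib Require Cantor.
From Coquelicot Require Import Coquelicot.
Open Scope R_scope.

Lemma locally_of_open_interval (P : R -> Prop) lo hi b :
  lo < b < hi -> (forall y, lo < y < hi -> P y) -> locally b P.
Proof.
  intros Hb HP. assert (Hr : 0 < Rmin (b - lo) (hi - b)) by (apply Rmin_glb_lt; lra).
  exists (mkposreal _ Hr). intros y Hy. apply HP.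
  unfold ball in Hy; simpl in Hy; unfold AbsRing_ball, minus, plus, opp in Hy; simpl in Hy.
  apply Rabs_def2 in Hy.
  pose proof (Rmin_l (b - lo) (hi - b)). pose proof (Rmin_r (b - lo) (hi - b)). lra.
Qed.

Lemma continuity_pt_ball f b : continuity_pt f b -> forall eps, 0 < eps ->
  exists al, 0 < al /\ forall y, Rabs (y - b) < al -> Rabs (f y - f b) < eps.
Proof.
  intros Hc eps He. destruct (Hc eps He) as [al [Hal H]]. exists al. split; [easy|].
  intros y Hy. destruct (Req_dec y b) as [->|Hne].
  - now rewrite Rminus_diag, Rabs_R0.
  - apply (H y). split; [now split|exact Hy].
Qed.

Definition eventually_right0 (P : R -> Prop) :=
  exists del, 0 < del /\ forall t, 0 < t < del -> P t.

Lemma frequently_of_not_eventually_right0 (P : R -> Prop) :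
  ~ eventually_right0 P -> forall del, 0 < del -> exists t, 0 < t < del /\ ~ P t.
Proof.
  intros N del Hd. apply NNPP. intro N2. apply N. exists del. split; [easy|].
  intros t Ht. apply NNPP. intro N3. apply N2. eauto.
Qed.

Lemma eventually_right0_and (P Q : R -> Prop) :
  eventually_right0 P -> eventually_right0 Q -> eventually_right0 (fun t => P t /\ Q t).
Proof.
  intros [d1 [Hd1 H1]] [d2 [Hd2 H2]]. exists (Rmin d1 d2). split; [now apply Rmin_glb_lt|].
  intros t Ht. pose proof (Rmin_l d1 d2). pose proof (Rmin_r d1 d2).
  split; [apply H1|apply H2]; lra.
Qed.

Lemma ge_of_adherent f b c : continuity_pt f b ->
  (forall e, 0 < e -> exists y, Rabs (y - b) < e /\ c <= f y) -> c <= f b.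
Proof.
  intros Hc Hb. apply Rnot_lt_le. intros Hlt.
  destruct (continuity_pt_ball f b Hc _ (proj2 (Rlt_0_minus _ _) Hlt)) as [al [Hal Hal']].
  destruct (Hb al Hal) as [y [Hy Fy]]. specialize (Hal' y Hy).
  apply Rabs_def2 in Hal'. lra.
Qed.

Lemma le_of_adherent f b c : continuity_pt f b ->
  (forall e, 0 < e -> exists y, Rabs (y - b) < e /\ f y <= c) -> f b <= c.
Proof.
  intros Hc Hb. apply Rnot_lt_le. intros Hlt.
  destruct (continuity_pt_ball f b Hc _ (proj2 (Rlt_0_minus _ _) Hlt)) as [al [Hal Hal']].
  destruct (Hb al Hal) as [y [Hy Fy]]. specialize (Hal' y Hy).
  apply Rabs_def2 in Hal'. lra.
Qed.

Lemma ex_lim_right0_of_cauchy (f : R -> R) :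
  (forall eps, 0 < eps -> exists del, 0 < del /\
     forall t t', 0 < t < del -> 0 < t' < del -> Rabs (f t - f t') < eps) ->
  exists l, forall eps, 0 < eps -> eventually_right0 (fun t => Rabs (f t - l) < eps).
Proof.
  intros Hc.
  set (u n := f (/ INR (S n))).
  assert (Hsmall : forall del, 0 < del ->
            exists N, forall n, (N <= n)%nat -> 0 < / INR (S n) < del).
  { intros del Hd. destruct (archimed_cor1 del Hd) as [N [HN HN0]]. exists N. intros n Hn.
    assert (0 < INR N) by (apply lt_0_INR; lia).
    assert (INR N <= INR (S n)) by (apply le_INR; lia).
    split; [apply Rinv_0_lt_compat; lra|].
    apply Rle_lt_trans with (/ INR N); [apply Rinv_le_contravar; lra|easy]. }
  destruct (Rcomplete.R_complete u) as [l Hl].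
  { intros eps He. destruct (Hc eps He) as [del [Hd C]].
    destruct (Hsmall del Hd) as [N HN]. exists N. intros n m Hn Hm.
    unfold R_dist, u. apply C; apply HN; lia. }
  exists l. intros eps He.
  destruct (Hc (eps/2) ltac:(lra)) as [del [Hd C]]. exists del. split; [easy|]. intros t Ht.
  destruct (Hl (eps/2) ltac:(lra)) as [N1 HN1]. destruct (Hsmall del Hd) as [N2 HN2].
  set (n := Nat.max N1 N2).
  specialize (HN1 n ltac:(lia)). specialize (HN2 n ltac:(lia)).
  unfold R_dist, u in HN1. specialize (C t _ Ht HN2).
  replace (f t - l) with ((f t - f (/ INR (S n))) + (f (/ INR (S n)) - l)) by ring.
  eapply Rle_lt_trans; [apply Rabs_triang|lra].
Qed.

Lemma le_of_right_increments (phi : R -> R) p q : p < q ->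
  (forall x, p <= x <= q -> continuity_pt phi x) ->
  (forall x, p <= x < q -> forall del, 0 < del ->
     exists h, 0 < h < del /\ phi x <= phi (x + h)) ->
  phi p <= phi q.
Proof.
  intros Hpq Hc Hs.
  set (E := fun x => p <= x <= q /\ phi p <= phi x).
  destruct (completeness E) as [m [Hm1 Hm2]].
  { exists q. now intros x [Hx _]. }
  { exists p. split; lra. }
  assert (Hpm : p <= m) by (apply Hm1; split; lra).
  assert (Hmq : m <= q) by (apply Hm2; now intros x [Hx _]).
  assert (Em : phi p <= phi m).
  { apply Rnot_lt_le. intros Hlt.
    destruct (Hc m (conj Hpm Hmq) (phi p - phi m) ltac:(lra)) as [al [Hal Hal']].
    assert (exists x, E x /\ m - al < x) as [x [[Hx Ex] Hx2]].
    { apply NNPP. intro N. enough (m <= m - al) by lra.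
      apply Hm2. intros x Ex. apply Rnot_lt_le. intros Hx. apply N. eauto. }
    assert (x <= m) by (apply Hm1; now split).
    destruct (Req_dec x m) as [->|Hne]; [lra|].
    assert (Rabs (phi x - phi m) < phi p - phi m) as Hd%Rabs_def2.
    { apply Hal'. split; [now split|]. simpl; unfold R_dist. rewrite Rabs_left; lra. }
    lra. }
  destruct (Req_dec m q) as [<-|Hne]; [easy|].
  destruct (Hs m ltac:(lra) (q - m) ltac:(lra)) as [h [Hh Hh2]].
  enough (m + h <= m) by lra.
  apply Hm1. split; lra.
Qed.

Lemma nested_intervals_common_point (I : nat -> R * R) :
  (forall n, fst (I n) < snd (I n)) ->
  (forall n, fst (I n) <= fst (I (S n)) /\ snd (I (S n)) <= snd (I n)) ->
  exists x, forall n, fst (I n) <= x <= snd (I n).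
Proof.
  intros Hne Hnest.
  assert (Hmono : forall n k, fst (I n) <= fst (I (n + k)%nat) /\
                              snd (I (n + k)%nat) <= snd (I n)).
  { intros n k. induction k as [|k IH]; [rewrite Nat.add_0_r; lra|].
    rewrite Nat.add_succ_r. destruct (Hnest (n + k)%nat). lra. }
  assert (Hlt : forall m n, fst (I m) < snd (I n)).
  { intros m n. destruct (Nat.le_ge_cases m n) as [H|H].
    - destruct (Hmono m (n - m)%nat) as [A _]. replace (m + (n - m))%nat with n in A by lia.
      specialize (Hne n). lra.
    - destruct (Hmono n (m - n)%nat) as [_ A]. replace (n + (m - n))%nat with m in A by lia.
      specialize (Hne m). lra. }
  destruct (completeness (fun x => exists n, x = fst (I n))) as [x [Hx1 Hx2]].
  { exists (snd (I 0%nat)). intros x [n ->]. left. apply Hlt. }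
  { exists (fst (I 0%nat)). now exists 0%nat. }
  exists x. intros n. split.
  - apply Hx1. now exists n.
  - apply Hx2. intros y [m ->]. left. apply Hlt.
Qed.

Section BaireInterval.

Variable F : nat -> R -> Prop.
Hypothesis F_closed : forall n x,
  (forall e, 0 < e -> exists y, Rabs (y - x) < e /\ F n y) -> F n x.

Definition avoiding_subinterval n (pq r : R * R) :=
  fst pq <= fst r < snd r /\ snd r <= snd pq /\ forall y, fst r <= y <= snd r -> ~ F n y.

Lemma exists_avoiding_subinterval n pq x :
  fst pq < snd pq -> fst pq <= x <= snd pq -> ~ F n x ->
  exists r, avoiding_subinterval n pq r.
Proof.
  destruct pq as [p q]; simpl. intros Hpq Hx Fx.
  assert (exists e, 0 < e /\ forall y, Rabs (y - x) < e -> ~ F n y) as [e [He He']].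
  { apply NNPP. intro N. apply Fx, F_closed. intros e He.
    apply NNPP. intro N2. apply N. exists e. split; [easy|]. intros y Hy Fy. eauto. }
  assert (Hin : forall y, x - e/2 <= y <= x + e/2 -> ~ F n y)
    by (intros y Hy; apply He'; apply Rabs_def1; lra).
  pose proof (Rmin_l q (x + e/2)). pose proof (Rmin_r q (x + e/2)).
  pose proof (Rmax_l p (x - e/2)). pose proof (Rmax_r p (x - e/2)).
  destruct (Rlt_or_le x q) as [Hxq|Hxq].
  - exists (x, Rmin q (x + e/2)). unfold avoiding_subinterval; simpl.
    assert (x < Rmin q (x + e/2)) by (apply Rmin_glb_lt; lra).
    repeat split; try lra. intros y Hy. apply Hin. lra.
  - exists (Rmax p (x - e/2), x). unfold avoiding_subinterval; simpl.
    assert (Rmax p (x - e/2) < x) by (apply Rmax_lub_lt; lra).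
    repeat split; try lra. intros y Hy. apply Hin. lra.
Qed.

Definition next_avoiding n pq : R * R :=
  epsilon (inhabits (0, 0)) (avoiding_subinterval n pq).

Fixpoint avoiding_chain (a b : R) (n : nat) : R * R :=
  match n with O => (a, b) | S m => next_avoiding m (avoiding_chain a b m) end.

Lemma avoiding_chain_spec a b : a < b ->
  (forall n p q, a <= p -> p < q -> q <= b -> exists x, p <= x <= q /\ ~ F n x) ->
  forall n, let I := avoiding_chain a b in
    (a <= fst (I n) < snd (I n) /\ snd (I n) <= b) /\ avoiding_subinterval n (I n) (I (S n)).
Proof.
  intros Hab Hnot.
  assert (Hnext : forall n pq, a <= fst pq < snd pq -> snd pq <= b ->
                    avoiding_subinterval n pq (next_avoiding n pq)).
  { intros n pq H1 H2. unfold next_avoiding. apply epsilon_spec.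
    destruct (Hnot n (fst pq) (snd pq)) as [x [Hx Fx]]; try lra.
    now apply (exists_avoiding_subinterval n _ x). }
  intros n I. induction n as [|n [[IH1 IH2] (A1 & A2 & _)]].
  - split; [simpl; lra|]. apply Hnext; simpl; lra.
  - assert (a <= fst (I (S n)) < snd (I (S n)) /\ snd (I (S n)) <= b) as [B1 B2] by lra.
    split; [easy|]. now apply Hnext.
Qed.

Lemma baire_interval a b : a < b ->
  (forall x, a <= x <= b -> exists n, F n x) ->
  exists n p q, a <= p /\ p < q /\ q <= b /\ forall x, p <= x <= q -> F n x.
Proof.
  intros Hab Hcov. apply NNPP. intro N.
  assert (Hnot : forall n p q, a <= p -> p < q -> q <= b -> exists x, p <= x <= q /\ ~ F n x).
  { intros n p q Hp Hpq Hq. apply NNPP. intro N2. apply N. exists n, p, q.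
    repeat split; try easy. intros x Hx. apply NNPP. eauto. }
  pose proof (avoiding_chain_spec a b Hab Hnot) as Hspec.
  destruct (nested_intervals_common_point (avoiding_chain a b)) as [x Hx].
  - intros n. apply Hspec.
  - intros n. destruct (Hspec n) as [_ (?&?&_)]. lra.
  - destruct (Hcov x) as [n Fn].
    { destruct (Hx 0%nat), (Hspec 0%nat) as [? _]; simpl in *; lra. }
    destruct (Hspec n) as [_ (_&_&Havoid)]. exact (Havoid x (Hx (S n)) Fn).
Qed.

End BaireInterval.

Lemma IZR_as_INR_diff z : IZR z = INR (Z.to_nat z) - INR (Z.to_nat (- z)).
Proof.
  rewrite !INR_IZR_INZ.
  destruct z; simpl; rewrite ?positive_nat_Z; [lra|lra|].
  rewrite <- Pos2Z.opp_pos, opp_IZR. lra.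
Qed.

Section IncreasingOddProfile.

Variable g : R -> R.
Hypothesis g_cont : forall a, 0 < a < 1 -> continuous g a.
Hypothesis g_incr : forall a b, 0 < a < 1 -> 0 < b < 1 -> a < b -> g a < g b.
Hypothesis g_sym : forall a, 0 < a < 1 -> g (1 - a) = - g a.
Hypothesis g_to_minfty : filterlim g (at_right 0) (Rbar_locally m_infty).

Lemma g_half : g (1/2) = 0.
Proof.
  pose proof (g_sym (1/2) ltac:(lra)) as E.
  replace (1 - 1/2) with (1/2) in E by field. lra.
Qed.

Lemma g_lt_iff a b : 0 < a < 1 -> 0 < b < 1 -> (g a < g b <-> a < b).
Proof.
  intros Ha Hb. split; intro H; [|now apply g_incr].
  destruct (Rtotal_order a b) as [|[->|Hba]]; [easy|lra|].
  pose proof (g_incr b a Hb Ha Hba); lra.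
Qed.

Lemma g_le_iff a b : 0 < a < 1 -> 0 < b < 1 -> (g a <= g b <-> a <= b).
Proof.
  intros Ha Hb. pose proof (g_lt_iff b a Hb Ha). split; intro H1.
  - destruct (Rle_or_lt a b) as [|Hba]; [easy|]. apply H in Hba; lra.
  - destruct (Rle_or_lt (g a) (g b)) as [|Hba]; [easy|]. apply H in Hba; lra.
Qed.

Lemma g_continuity_pt a : 0 < a < 1 -> continuity_pt g a.
Proof. intros Ha. now apply continuity_pt_filterlim, g_cont. Qed.

Lemma g_unbounded_below y : exists a, 0 < a < 1 /\ g a < y.
Proof.
  destruct (g_to_minfty (fun z => z < y) (ex_intro _ y (fun _ H => H))) as [d Hd].
  pose proof (cond_pos d). set (a := Rmin (d/2) (1/2)).
  assert (0 < a <= d/2 /\ a <= 1/2)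
    by (unfold a; repeat split; [apply Rmin_glb_lt|apply Rmin_l|apply Rmin_r]; lra).
  exists a; split; [lra|]. apply Hd; [|lra].
  unfold ball; simpl; unfold AbsRing_ball, minus, plus, opp; simpl.
  rewrite Rabs_right; lra.
Qed.

Lemma g_unbounded_above y : exists a, 0 < a < 1 /\ y < g a.
Proof.
  destruct (g_unbounded_below (- y)) as [a [Ha Hy]].
  exists (1 - a). split; [lra|]. rewrite g_sym; lra.
Qed.

Lemma g_surjective y : exists a, 0 < a < 1 /\ g a = y.
Proof.
  destruct (g_unbounded_below y) as [a1 [H1 E1]].
  destruct (g_unbounded_above y) as [a2 [H2 E2]].
  assert (a1 < a2) by (apply g_lt_iff; lra).
  destruct (IVT_interv (fun x => g x - y) a1 a2) as [z [Hz Ez]]; try lra.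
  - intros a Ha. apply continuity_pt_minus; [apply g_continuity_pt; lra|].
    apply continuity_pt_const. now intros u v.
  - exists z; split; lra.
Qed.

Lemma ginv_spec y : 0 < ginv g y < 1 /\ g (ginv g y) = y.
Proof.
  apply (epsilon_spec (inhabits 0) (fun a => 0 < a < 1 /\ g a = y)).
  apply g_surjective.
Qed.

Lemma ginv_g a : 0 < a < 1 -> ginv g (g a) = a.
Proof.
  intros Ha. destruct (ginv_spec (g a)) as [H1 H2].
  apply Rle_antisym; [apply (g_le_iff _ a)|apply (g_le_iff a)]; lra.
Qed.

Lemma ginv_lt y1 y2 : y1 < y2 -> ginv g y1 < ginv g y2.
Proof.
  intros H. destruct (ginv_spec y1), (ginv_spec y2). apply g_lt_iff; lra.
Qed.

Lemma ginv_le y1 y2 : y1 <= y2 -> ginv g y1 <= ginv g y2.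
Proof. intros [H| ->]; [left; now apply ginv_lt|lra]. Qed.

Lemma ginv_continuity_pt y : continuity_pt (ginv g) y.
Proof.
  destruct (ginv_spec (y - 1)) as [Hl El], (ginv_spec (y + 1)) as [Hu Eu].
  assert (Hlu : ginv g (y - 1) < ginv g (y + 1)) by (apply ginv_lt; lra).
  apply (continuity_pt_recip_interv g (ginv g) _ _ Hlu).
  - intros x z Hx Hxz Hz. apply g_incr; lra.
  - intros x _ _. apply ginv_spec.
  - intros x Hx Hx'. rewrite El, Eu in *. split; apply ginv_le; lra.
  - intros a Ha. apply g_continuity_pt; lra.
  - rewrite El, Eu; lra.
Qed.

Lemma is_derive_ginv y :
  (forall a, 0 < a < 1 -> ex_derive g a) -> Derive g (ginv g y) <> 0 ->
  is_derive (ginv g) y (/ Derive g (ginv g y)).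
Proof.
  intros Hd Hnz.
  assert (Prf : forall a, ginv g (y - 1) <= a <= ginv g (y + 1) -> derivable_pt g a).
  { intros a Ha. apply ex_derive_Reals_0, Hd.
    destruct (ginv_spec (y - 1)), (ginv_spec (y + 1)); lra. }
  assert (Hmono : ginv g (y - 1) <= ginv g y <= ginv g (y + 1))
    by (split; apply ginv_le; lra).
  apply is_derive_Reals. rewrite <- (Derive_Reals g _ (Prf _ Hmono)) in *.
  replace (/ _) with (1 / derive_pt g (ginv g y) (Prf _ Hmono)) by (unfold Rdiv; ring).
  apply (derivable_pt_lim_recip_interv g (ginv g) (y - 1) (y + 1) y Prf
           (ginv_continuity_pt y)); try lra; auto.
  intros x _. apply ginv_spec.
Qed.

Lemma J_differentiable_of_derivable :
  (forall a, 0 < a < 1 -> ex_derive g a /\ Derive g a <> 0) ->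
  J_differentiable_on_S g.
Proof.
  intros HD a b Ha Hb. unfold Jfun.
  apply (ex_filterdiff_comp' (fun p : R * R => g (fst p) - g (snd p)) (ginv g)).
  - apply (ex_filterdiff_minus_fct (fun p : R * R => g (fst p)) (fun p => g (snd p)));
      apply (ex_filterdiff_comp' _ g).
    + apply ex_filterdiff_linear, is_linear_fst.
    + apply ex_derive_filterdiff, HD, Ha.
    + apply ex_filterdiff_linear, is_linear_snd.
    + apply ex_derive_filterdiff, HD, Hb.
  - apply ex_derive_filterdiff. eexists. apply is_derive_ginv.
    + intros c Hc. now apply HD.
    + apply HD, ginv_spec.
Qed.

Lemma g_Jfun x b : g (Jfun g x b) = g x - g b.
Proof. apply ginv_spec. Qed.

Lemma Jfun_diag b : Jfun g b b = 1/2.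
Proof. unfold Jfun. rewrite Rminus_diag, <- g_half. apply ginv_g; lra. Qed.

Lemma Jfun_Jfun x b : 0 < x < 1 -> 0 < b < 1 -> Jfun g (Jfun g x b) (1 - b) = x.
Proof.
  intros Hx Hb. unfold Jfun at 1. rewrite g_Jfun, g_sym by easy.
  replace (g x - g b - - g b) with (g x) by ring. now apply ginv_g.
Qed.

Section DifferentiableJ.

Hypothesis J_diff : J_differentiable_on_S g.

Lemma ex_derive_Jfun_l a b : 0 < a < 1 -> 0 < b < 1 ->
  ex_derive (fun x => Jfun g x b) a.
Proof.
  intros Ha Hb. apply ex_derive_filterdiff.
  apply (ex_filterdiff_comp'_2 (fun x : R => x) (fun _ : R => b) (fun x y => Jfun g x y) a).
  - apply ex_filterdiff_id.
  - apply ex_filterdiff_const.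
  - now apply J_diff.
Qed.

Definition J_quot b h := (Jfun g (b + h) b - 1/2) / h.

Definition dJ_diag b := Derive (fun x => Jfun g x b) b.

Lemma J_quot_pos b h : 0 < b -> 0 < h -> b + h < 1 -> 0 < J_quot b h.
Proof.
  intros Hb Hh Hbh. apply Rdiv_lt_0_compat; [|easy].
  rewrite <- (Jfun_diag b). apply Rlt_0_minus, ginv_lt.
  enough (g b < g (b + h)) by lra. apply g_incr; lra.
Qed.

Lemma J_quot_cvg b : 0 < b < 1 ->
  forall eps, 0 < eps -> exists del, 0 < del /\
    forall h, 0 < h < del -> Rabs (J_quot b h - dJ_diag b) < eps.
Proof.
  intros Hb eps He.
  destruct (proj1 (is_derive_Reals _ _ _)
              (Derive_correct _ _ (ex_derive_Jfun_l b b Hb Hb)) eps He) as [d Hd].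
  exists d. split; [apply cond_pos|]. intros h Hh.
  specialize (Hd h ltac:(lra) ltac:(rewrite Rabs_right; lra)).
  now rewrite Jfun_diag in Hd.
Qed.

Lemma dJ_diag_nonneg b : 0 < b < 1 -> 0 <= dJ_diag b.
Proof.
  intros Hb. apply Rnot_lt_le. intros Hn.
  destruct (J_quot_cvg b Hb (- dJ_diag b) ltac:(lra)) as [d [Hd Hq]].
  set (h := Rmin (d/2) ((1 - b)/2)).
  assert (0 < h <= d/2 /\ h <= (1 - b)/2)
    by (unfold h; repeat split; [apply Rmin_glb_lt|apply Rmin_l|apply Rmin_r]; lra).
  pose proof (J_quot_pos b h ltac:(lra) ltac:(lra) ltac:(lra)).
  specialize (Hq h ltac:(lra)). apply Rabs_def2 in Hq. lra.
Qed.

Lemma dJ_diag_pos b : 0 < b < 1 -> 0 < dJ_diag b.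
Proof.
  intros Hb. destruct (dJ_diag_nonneg b Hb) as [|E]; [easy|exfalso].
  assert (Hh : 0 < Jfun g b b < 1) by (rewrite Jfun_diag; lra).
  pose proof (is_derive_comp (fun y => Jfun g y (1 - b)) (fun x => Jfun g x b) b _ _
    (Derive_correct _ _ (ex_derive_Jfun_l _ (1 - b) Hh ltac:(lra)))
    (Derive_correct _ _ (ex_derive_Jfun_l b b Hb Hb))) as C.
  apply (is_derive_ext_loc _ (fun x => x)) in C.
  - apply is_derive_unique in C. rewrite Derive_id in C.
    assert (dJ_diag b * Derive (fun y => Jfun g y (1 - b)) (Jfun g b b) = 1) as C'
      by exact (eq_sym C).
    rewrite <- E in C'. lra.
  - apply (locally_of_open_interval _ 0 1); [easy|]. intros y Hy. now apply Jfun_Jfun.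
Qed.

Lemma J_quot_continuity_pt b h : 0 < b < 1 -> 0 < b + h < 1 ->
  continuity_pt (fun b => J_quot b h) b.
Proof.
  intros Hb Hbh. unfold J_quot, Jfun. apply continuity_pt_filterlim.
  apply (continuous_mult (K := R_AbsRing)
           (fun y => ginv g (g (y + h) - g y) - 1/2) (fun _ => / h));
    [|apply continuous_const].
  apply (continuous_minus (K := R_AbsRing) (V := R_NormedModule) _ (fun _ => 1/2));
    [|apply continuous_const].
  apply (continuous_comp (fun y => g (y + h) - g y) (ginv g));
    [|apply continuity_pt_filterlim, ginv_continuity_pt].
  apply (continuous_minus (K := R_AbsRing) (V := R_NormedModule)); [|now apply g_cont].
  apply (continuous_comp (fun y => y + h) g); [|now apply g_cont].
  apply (continuous_plus (K := R_AbsRing) (V := R_NormedModule));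
    [apply continuous_id|apply continuous_const].
Qed.

Definition g_centered t := g (1/2 + t).

Lemma g_centered_0 : g_centered 0 = 0.
Proof. unfold g_centered. now rewrite Rplus_0_r, g_half. Qed.

Lemma g_centered_pos t : 0 < t < 1/2 -> 0 < g_centered t.
Proof. intros Ht. unfold g_centered. rewrite <- g_half. apply g_incr; lra. Qed.

Lemma g_centered_odd h : -1/2 < h < 1/2 -> g_centered h = - g_centered (- h).
Proof.
  intros Hh. unfold g_centered. rewrite <- g_sym by lra.
  now replace (1 - (1/2 + - h)) with (1/2 + h) by field.
Qed.

Definition right_step x t := ginv g (g x + g_centered t) - x.

Lemma right_step_spec x t : 0 < x < 1 -> 0 < t < 1/2 ->
  0 < right_step x t /\ J_quot x (right_step x t) * right_step x t = t /\
  g (x + right_step x t) - g x = g_centered t.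
Proof.
  intros Hx Ht. unfold right_step.
  destruct (ginv_spec (g x + g_centered t)) as [Hy Ey].
  set (y := ginv g (g x + g_centered t)) in *.
  pose proof (g_centered_pos t Ht).
  assert (x < y) by (rewrite <- (ginv_g x Hx); apply ginv_lt; lra).
  replace (x + (y - x)) with y by ring.
  split; [lra|split; [|lra]].
  unfold J_quot, Jfun. replace (x + (y - x)) with y by ring.
  replace (g y - g x) with (g_centered t) by lra.
  unfold g_centered at 1. rewrite ginv_g by lra. field. lra.
Qed.

Lemma right_step_small x r : 0 < x < 1 -> 0 < r ->
  exists eta, 0 < eta /\ forall t, 0 < t < eta -> right_step x t < r.
Proof.
  intros Hx Hr.
  assert (Hc : continuity_pt (right_step x) 0).
  { apply continuity_pt_filterlim. unfold right_step, g_centered.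
    apply (continuous_minus (K := R_AbsRing) (V := R_NormedModule)
             (fun t => ginv g (g x + g (1/2 + t))) (fun _ => x));
      [|apply continuous_const].
    apply (continuous_comp (fun t => g x + g (1/2 + t)) (ginv g));
      [|apply continuity_pt_filterlim, ginv_continuity_pt].
    apply (continuous_plus (K := R_AbsRing) (V := R_NormedModule));
      [apply continuous_const|].
    apply (continuous_comp (fun t => 1/2 + t) g); [|apply g_cont; lra].
    apply (continuous_plus (K := R_AbsRing) (V := R_NormedModule));
      [apply continuous_const|apply continuous_id]. }
  assert (H0 : right_step x 0 = 0)
    by (unfold right_step; rewrite g_centered_0, Rplus_0_r, ginv_g; lra).
  destruct (continuity_pt_ball _ _ Hc r Hr) as [al [Hal Hal']].
  exists al. split; [easy|]. intros t Ht.
  specialize (Hal' t ltac:(rewrite Rminus_0_r, Rabs_right; lra)).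
  rewrite H0, Rminus_0_r in Hal'. apply Rabs_def2 in Hal'. lra.
Qed.

Lemma frequent_right_steps x (P : R -> Prop) r : 0 < x < 1 -> 0 < r ->
  (forall del, 0 < del -> exists t, 0 < t < del /\ P t) ->
  exists t, P t /\ 0 < t < 1/2 /\ 0 < right_step x t < r.
Proof.
  intros Hx Hr Hfr. destruct (right_step_small x r Hx Hr) as [eta [Heta Hstep]].
  destruct (Hfr (Rmin eta (1/2)) ltac:(apply Rmin_glb_lt; lra)) as [t [Ht Pt]].
  pose proof (Rmin_l eta (1/2)). pose proof (Rmin_r eta (1/2)).
  exists t. split; [easy|]. split; [lra|]. split.
  - apply (right_step_spec x t); lra.
  - apply Hstep; lra.
Qed.

Lemma slope_ge_of_frequent p q r0 mu c : 0 < p -> p < q -> q < 1 -> 0 < r0 -> 0 < c ->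
  (forall b, p <= b <= q -> forall h, 0 < h <= r0 -> mu <= J_quot b h) ->
  (forall del, 0 < del -> exists t, 0 < t < del /\ c * t <= g_centered t) ->
  c * mu * (q - p) <= g q - g p.
Proof.
  intros Hp Hpq Hq Hr Hc Hmu Hfr.
  enough (g p - c * mu * p <= g q - c * mu * q) by lra.
  apply (le_of_right_increments (fun x => g x - c * mu * x)); [easy| |].
  - intros x Hx. apply continuity_pt_minus; [apply g_continuity_pt; lra|].
    apply continuity_pt_mult; [|apply continuity_pt_id].
    apply continuity_pt_const. now intros u v.
  - intros x Hx del Hdel.
    destruct (frequent_right_steps x _ (Rmin del r0) ltac:(lra)
                ltac:(now apply Rmin_glb_lt) Hfr) as [t [Ht [Ht' Hh]]].
    destruct (right_step_spec x t ltac:(lra) Ht') as (_&Hquot&Hincr).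
    set (h := right_step x t) in *.
    pose proof (Rmin_l del r0). pose proof (Rmin_r del r0).
    exists h. split; [lra|].
    assert (mu * h <= t)
      by (rewrite <- Hquot; apply Rmult_le_compat_r; [lra|apply Hmu; lra]).
    nra.
Qed.

Lemma slope_le_of_frequent p q r0 nu c : 0 < p -> p < q -> q < 1 -> 0 < r0 -> 0 < c ->
  (forall b, p <= b <= q -> forall h, 0 < h <= r0 -> J_quot b h <= nu) ->
  (forall del, 0 < del -> exists t, 0 < t < del /\ g_centered t <= c * t) ->
  g q - g p <= c * nu * (q - p).
Proof.
  intros Hp Hpq Hq Hr Hc Hnu Hfr.
  enough (c * nu * p - g p <= c * nu * q - g q) by lra.
  apply (le_of_right_increments (fun x => c * nu * x - g x)); [easy| |].
  - intros x Hx. apply continuity_pt_minus; [|apply g_continuity_pt; lra].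
    apply continuity_pt_mult; [|apply continuity_pt_id].
    apply continuity_pt_const. now intros u v.
  - intros x Hx del Hdel.
    destruct (frequent_right_steps x _ (Rmin del r0) ltac:(lra)
                ltac:(now apply Rmin_glb_lt) Hfr) as [t [Ht [Ht' Hh]]].
    destruct (right_step_spec x t ltac:(lra) Ht') as (_&Hquot&Hincr).
    set (h := right_step x t) in *.
    pose proof (Rmin_l del r0). pose proof (Rmin_r del r0).
    exists h. split; [lra|].
    assert (t <= nu * h)
      by (rewrite <- Hquot; apply Rmult_le_compat_r; [lra|apply Hnu; lra]).
    nra.
Qed.

Lemma eventually_ratio_lt p q r0 mu c : 0 < p -> p < q -> q < 1 -> 0 < r0 -> 0 < mu ->
  (forall b, p <= b <= q -> forall h, 0 < h <= r0 -> mu <= J_quot b h) ->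
  g q - g p < c * mu * (q - p) ->
  eventually_right0 (fun t => g_centered t < c * t).
Proof.
  intros Hp Hpq Hq Hr Hmu Hlow Hslope. apply NNPP. intros N.
  assert (g p < g q) by (apply g_incr; lra).
  assert (0 < mu * (q - p)) by nra.
  assert (Hc : 0 < c) by (destruct (Rle_or_lt c 0); [nra|easy]).
  enough (c * mu * (q - p) <= g q - g p) by lra.
  apply (slope_ge_of_frequent p q r0); try easy.
  intros del Hd. destruct (frequently_of_not_eventually_right0 _ N del Hd) as [t [Ht Nt]].
  exists t. split; [easy|]. now apply Rnot_lt_le.
Qed.

Lemma eventually_ratio_gt p q r0 nu c : 0 < p -> p < q -> q < 1 -> 0 < r0 ->
  (forall b, p <= b <= q -> forall h, 0 < h <= r0 -> J_quot b h <= nu) ->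
  c * nu * (q - p) < g q - g p ->
  eventually_right0 (fun t => c * t < g_centered t).
Proof.
  intros Hp Hpq Hq Hr Hup Hslope. destruct (Rle_or_lt c 0) as [Hc|Hc].
  { exists (1/2). split; [lra|]. intros t Ht. pose proof (g_centered_pos t Ht). nra. }
  apply NNPP. intros N.
  enough (g q - g p <= c * nu * (q - p)) by lra.
  apply (slope_le_of_frequent p q r0); try easy.
  intros del Hd. destruct (frequently_of_not_eventually_right0 _ N del Hd) as [t [Ht Nt]].
  exists t. split; [easy|]. now apply Rnot_lt_le.
Qed.

(* [/ (INR N + 8)] keeps the steps [h] below [1/8], so that [b + h] stays in [(0,1)]. *)
Definition level_bounds th j (N : nat) b :=
  1/4 <= b <= 3/4 /\ forall h, 0 < h <= / (INR N + 8) ->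
    exp (j * th) <= J_quot b h <= exp ((j + 3) * th).

Lemma step_bound_pos (N : nat) : 0 < / (INR N + 8) <= 1/8.
Proof.
  pose proof (pos_INR N). split; [apply Rinv_0_lt_compat; lra|].
  unfold Rdiv. rewrite Rmult_1_l. apply Rinv_le_contravar; lra.
Qed.

Lemma level_bounds_closed th j N b :
  (forall e, 0 < e -> exists y, Rabs (y - b) < e /\ level_bounds th j N y) ->
  level_bounds th j N b.
Proof.
  intros Hb.
  assert (Hid : continuity_pt id b) by apply continuity_pt_id.
  assert (B1 : 1/4 <= id b).
  { apply (ge_of_adherent id b); [easy|]. intros e He.
    destruct (Hb e He) as [y [Hy [Hy' _]]]. exists y. split; [easy|unfold id; lra]. }
  assert (B2 : id b <= 3/4).
  { apply (le_of_adherent id b); [easy|]. intros e He.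
    destruct (Hb e He) as [y [Hy [Hy' _]]]. exists y. split; [easy|unfold id; lra]. }
  unfold id in B1, B2. split; [lra|]. intros h Hh. pose proof (step_bound_pos N).
  pose proof (J_quot_continuity_pt b h ltac:(lra) ltac:(lra)) as Hc.
  split.
  - apply (ge_of_adherent (fun b => J_quot b h)); [easy|]. intros e He.
    destruct (Hb e He) as [y [Hy [_ Hy']]]. exists y. split; [easy|]. now apply Hy'.
  - apply (le_of_adherent (fun b => J_quot b h)); [easy|]. intros e He.
    destruct (Hb e He) as [y [Hy [_ Hy']]]. exists y. split; [easy|]. now apply Hy'.
Qed.

Lemma level_bounds_cover th b : 0 < th -> 1/4 <= b <= 3/4 ->
  exists (j : Z) (N : nat), level_bounds th (IZR j) N b.
Proof.
  intros Hth Hb.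
  set (la := dJ_diag b). assert (Hla : 0 < la) by (apply dJ_diag_pos; auto; lra).
  destruct (archimed (ln la / th)) as [A1 A2].
  assert (E1 : ln la / th * th = ln la) by (field; lra).
  exists (up (ln la / th) - 2)%Z.
  set (u := ln la / th) in *.
  assert (exp_le : forall x y, x <= y -> exp x <= exp y)
    by (intros x y [H| ->]; [left; now apply exp_increasing|lra]).
  assert (X1 : exp (- th) < 1) by (rewrite <- exp_0; apply exp_increasing; lra).
  assert (X2 : 1 < exp th) by (rewrite <- exp_0; apply exp_increasing; lra).
  set (eps := Rmin (la - la * exp (- th)) (la * exp th - la)).
  assert (He : 0 < eps) by (unfold eps; apply Rmin_glb_lt; nra).
  pose proof (Rmin_l (la - la * exp (- th)) (la * exp th - la)).
  pose proof (Rmin_r (la - la * exp (- th)) (la * exp th - la)).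
  destruct (J_quot_cvg b ltac:(lra) eps He) as [del [Hdel Hq]].
  destruct (archimed_cor1 del Hdel) as [N [HN HN0]].
  exists N. split; [easy|]. intros h Hh.
  assert (0 < INR N) by (apply lt_0_INR; lia).
  assert (/ (INR N + 8) < / INR N) by (apply Rinv_lt_contravar; nra).
  specialize (Hq h ltac:(lra)). fold la in Hq. apply Rabs_def2 in Hq.
  rewrite minus_IZR. split.
  - apply Rle_trans with (la * exp (- th)); [|unfold eps in *; lra].
    rewrite <- (exp_ln la) by easy. rewrite <- exp_plus. apply exp_le. nra.
  - apply Rle_trans with (la * exp th); [unfold eps in *; lra|].
    rewrite <- (exp_ln la) by easy. rewrite <- exp_plus. apply exp_le. nra.
Qed.

Lemma level_bounds_on_interval th : 0 < th ->
  exists j N p q, 1/4 <= p /\ p < q /\ q <= 3/4 /\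
    forall b, p <= b <= q -> level_bounds th j N b.
Proof.
  intros Hth.
  (* [m] codes the triple ((j1, j2), N), read as the level [j = j1 - j2] *)
  set (int_code k := INR (fst (Cantor.of_nat k)) - INR (snd (Cantor.of_nat k))).
  set (F m := level_bounds th (int_code (fst (Cantor.of_nat m))) (snd (Cantor.of_nat m))).
  destruct (baire_interval F (fun m => level_bounds_closed th _ _) (1/4) (3/4))
    as [m [p [q [Hp [Hpq [Hq Hall]]]]]]; [lra| |].
  - intros b Hb. destruct (level_bounds_cover th b Hth Hb) as [j [N Hjn]].
    exists (Cantor.to_nat (Cantor.to_nat (Z.to_nat j, Z.to_nat (- j)), N)).
    unfold F, int_code. rewrite Cantor.cancel_of_to; cbn [fst snd].
    rewrite Cantor.cancel_of_to; cbn [fst snd]. now rewrite <- IZR_as_INR_diff.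
  - now exists (int_code (fst (Cantor.of_nat m))), (snd (Cantor.of_nat m)), p, q.
Qed.

Lemma g_centered_ratio_window th : 0 < th ->
  exists w, 0 < w /\ forall eta, 0 < eta -> eventually_right0 (fun t =>
    w - eta < g_centered t / t < w * exp (3 * th) + eta).
Proof.
  intros Hth.
  destruct (level_bounds_on_interval th Hth) as (j & N & p & q & Hp & Hpq & Hq & Hall).
  set (mu := exp (j * th)). set (nu := exp ((j + 3) * th)). set (r0 := / (INR N + 8)).
  pose proof (step_bound_pos N) as Hr0. fold r0 in Hr0.
  assert (Hmu : 0 < mu) by apply exp_pos. assert (Hnu : 0 < nu) by apply exp_pos.
  assert (Hnumu : nu = mu * exp (3 * th))
    by (unfold nu, mu; rewrite <- exp_plus; f_equal; ring).
  set (s := (g q - g p) / (q - p)).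
  assert (Hgpq : g p < g q) by (apply g_incr; lra).
  assert (Hs : 0 < s) by (apply Rdiv_lt_0_compat; lra).
  assert (Hsq : g q - g p = s * (q - p)) by (unfold s; field; lra).
  exists (s / nu). split; [now apply Rdiv_lt_0_compat|]. intros eta Heta.
  assert (Hup : eventually_right0 (fun t => g_centered t < (s / mu + eta) * t)).
  { apply (eventually_ratio_lt p q r0 mu); try lra; [intros b Hb h Hh; now apply Hall|].
    rewrite Hsq. replace ((s / mu + eta) * mu) with (s + eta * mu) by (field; lra).
    assert (0 < eta * mu * (q - p)) by (repeat apply Rmult_lt_0_compat; lra). nra. }
  assert (Hlow : eventually_right0 (fun t => (s / nu - eta) * t < g_centered t)).
  { apply (eventually_ratio_gt p q r0 nu); try lra; [intros b Hb h Hh; now apply Hall|].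
    rewrite Hsq. replace ((s / nu - eta) * nu) with (s - eta * nu) by (field; lra).
    assert (0 < eta * nu * (q - p)) by (repeat apply Rmult_lt_0_compat; lra). nra. }
  destruct (eventually_right0_and _ _ Hlow Hup) as [del [Hdel Hboth]].
  exists del. split; [easy|]. intros t Ht. destruct (Hboth t Ht) as [L U].
  replace (s / nu * exp (3 * th)) with (s / mu)
    by (rewrite Hnumu; field; split; [apply Rgt_not_eq, exp_pos|lra]).
  split; [apply Rlt_div_r|apply Rlt_div_l]; lra.
Qed.

(* The window for [th = 1] bounds the centres [w] of all narrower windows, so that their
   widths [w (exp (3 th) - 1) + 2 eta] become uniformly small. *)
Lemma g_centered_ratio_cauchy : forall eps, 0 < eps ->
  exists del, 0 < del /\ forall t t', 0 < t < del -> 0 < t' < del ->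
    Rabs (g_centered t / t - g_centered t' / t') < eps.
Proof.
  intros eps He.
  destruct (g_centered_ratio_window 1 ltac:(lra)) as [w1 [Hw1 W1]].
  set (M := w1 * exp (3 * 1) + 1).
  assert (HM : 0 < M) by (unfold M; pose proof (exp_pos (3 * 1)); nra).
  set (ka := eps / (4 * (M + 1))).
  assert (Hka : 0 < ka) by (unfold ka; apply Rdiv_lt_0_compat; lra).
  set (th := ln (1 + ka) / 3).
  assert (Hth : 0 < th)
    by (unfold th; apply Rdiv_lt_0_compat; [rewrite <- ln_1; apply ln_increasing|]; lra).
  assert (E3 : exp (3 * th) = 1 + ka)
    by (unfold th; replace (3 * (ln (1 + ka) / 3)) with (ln (1 + ka)) by field;
        apply exp_ln; lra).
  destruct (g_centered_ratio_window th Hth) as [w [Hw W]].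
  set (eta := Rmin (eps / 8) 1).
  assert (Heta : 0 < eta) by (unfold eta; apply Rmin_glb_lt; lra).
  assert (eta <= eps / 8 /\ eta <= 1) by (unfold eta; split; [apply Rmin_l|apply Rmin_r]).
  destruct (eventually_right0_and _ _ (W1 1 ltac:(lra)) (W eta Heta)) as [del [Hdel B]].
  rewrite E3 in B.
  assert (Hwm : w < M + 1)
    by (destruct (B (del / 2) ltac:(lra)) as [[_ U] [L _]]; fold M in U; lra).
  exists del. split; [easy|]. intros t t' Ht Ht'.
  destruct (B t Ht) as [_ C1], (B t' Ht') as [_ C2].
  assert (w * ka <= (M + 1) * ka) by (apply Rmult_le_compat_r; lra).
  assert ((M + 1) * ka = eps / 4) by (unfold ka; field; lra).
  apply Rabs_def1; nra.
Qed.

Lemma g_centered_ratio_limit :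
  exists d, 0 < d /\ forall eps, 0 < eps ->
    eventually_right0 (fun t => Rabs (g_centered t / t - d) < eps).
Proof.
  destruct (ex_lim_right0_of_cauchy _ g_centered_ratio_cauchy) as [d Hd].
  exists d. split; [|easy].
  destruct (g_centered_ratio_window 1 ltac:(lra)) as [w1 [Hw1 W1]].
  destruct (eventually_right0_and _ _ (W1 (w1/2) ltac:(lra)) (Hd (w1/2) ltac:(lra)))
    as [del [Hdel B]].
  destruct (B (del/2) ltac:(lra)) as [[B1 _] B2]. apply Rabs_def2 in B2. lra.
Qed.

Lemma is_derive_g_half : exists d, 0 < d /\ is_derive g (1/2) d.
Proof.
  destruct g_centered_ratio_limit as [d [Hd L]].
  exists d. split; [easy|]. apply is_derive_Reals. intros eps He.
  destruct (L eps He) as [del [Hdel B]].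
  assert (Hr : 0 < Rmin del (1/2)) by (apply Rmin_glb_lt; lra).
  exists (mkposreal _ Hr). intros h Hh0 Hh. simpl in Hh.
  pose proof (Rmin_l del (1/2)). pose proof (Rmin_r del (1/2)).
  change (g (1/2 + h)) with (g_centered h). rewrite g_half, Rminus_0_r.
  destruct (Rle_or_lt 0 h) as [[Hp|Hp]|Hn]; [|congruence|].
  - rewrite Rabs_right in Hh by lra. apply B; lra.
  - rewrite Rabs_left in Hh by lra. rewrite g_centered_odd by lra.
    replace (- g_centered (- h) / h) with (g_centered (- h) / (- h)) by (field; lra).
    apply B; lra.
Qed.

End DifferentiableJ.

Lemma derivable_of_J_differentiable : J_differentiable_on_S g ->
  forall a, 0 < a < 1 -> ex_derive g a /\ Derive g a <> 0.
Proof.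
  intros HJ a Ha.
  destruct (is_derive_g_half HJ) as [d [Hd Dd]].
  pose proof (dJ_diag_pos HJ a Ha) as Hla.
  assert (Dg : exists l, is_derive g a l /\ l = dJ_diag a * d).
  { eexists; split.
    - apply (is_derive_ext (fun x => g (Jfun g x a) + g a)).
      + intros x. change (@eq R (g (Jfun g x a) + g a) (g x)). rewrite g_Jfun. ring.
      + apply (is_derive_plus (fun x => g (Jfun g x a)) (fun _ => g a));
          [|apply is_derive_const].
        apply (is_derive_comp g (fun x => Jfun g x a)).
        * rewrite Jfun_diag. exact Dd.
        * now apply Derive_correct, ex_derive_Jfun_l.
    - unfold plus, scal, zero; simpl; unfold mult; simpl. apply Rplus_0_r. }
  destruct Dg as [l [Dg ->]].
  split; [eexists; exact Dg|].
  rewrite (is_derive_unique _ _ _ Dg). nra.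
Qed.

End IncreasingOddProfile.

Theorem proposition5p7 (g : R -> R)
  (Hcont : forall a, 0 < a < 1 -> continuous g a)
  (Hincr : forall a b, 0 < a < 1 -> 0 < b < 1 -> a < b -> g a < g b)
  (Hsym : forall a, 0 < a < 1 -> g (1 - a) = - g a)
  (Hlim : filterlim g (at_right 0) (Rbar_locally m_infty)) :
  ((forall a, 0 < a < 1 ->
      ex_derive g a /\ continuous (Derive g) a /\ Derive g a <> 0) ->
    J_differentiable_on_S g)
  /\
  (J_differentiable_on_S g ->
    forall a, 0 < a < 1 -> ex_derive g a /\ Derive g a <> 0).
Proof.
  split.
  - intros HD. apply (J_differentiable_of_derivable g Hcont Hincr Hsym Hlim).
    intros a Ha. now destruct (HD a Ha) as (Hd & _ & Hnz).
  - exact (derivable_of_J_differentiable g Hcont Hincr Hsym Hlim).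
Qed.
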